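(* Let $\mu$ be a centrally symmetric Borel probability measure on the unit sphere $S^2\subset\mathbb R^3$ (i.e. $\mu(-E)=\mu(E)$ for Borel $E$). For $\mathbf n_0\in\mathbb R^3$ with $|\mathbf n_0|\le1$, $\lambda\in[-1,1]$ and a Borel function $g:S^2\to[0,1]$, define $$x_0(\lambda,\mathbf n_0,g)=\int\big[1_{\mathbf n_0^T\mathbf n>\lambda}(\mathbf n)+g(\mathbf n)1_{\mathbf n_0^T\mathbf n=\lambda}(\mathbf n)\big]\,d\mu(\mathbf n),\qquad \mathbf b(\lambda,\mathbf n_0,g)=\int\big[1_{\mathbf n_0^T\mathbf n>\lambda}(\mathbf n)+g(\mathbf n)1_{\mathbf n_0^T\mathbf n=\lambda}(\mathbf n)\big]\,\mathbf n\,d\mu(\mathbf n).$$ If $x_0(\lambda,\mathbf n_0,g)=\tfrac12$, then $\mathbf b(0,\mathbf n_0,g)=\mathbf b(\lambda,\mathbf n_0,g)$.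
   Context: $1_X$ denotes the indicator function of a set $X\subseteq S^2$. (In the paper, the points $(x_0,\mathbf b)$ parametrize the boundary of the box generated by the ansatz $\mu$, and $x_0=\tfrac12$ is the cross-section relevant for T-states.) *)

From HB Require Import structures.
From mathcomp Require Import all_boot all_order all_algebra.
From mathcomp Require Import all_classical all_reals all_analysis.
Set Implicit Arguments. Unset Strict Implicit. Unset Printing Implicit Defensive.
Import Order.TTheory GRing.Theory Num.Theory.
Local Open Scope classical_set_scope.
Local Open Scope ring_scope.

(* Points of R^3 are represented as triples ((x, y), z), with the product
   (= Borel) sigma-algebra. *)

Definition dot3 {R : realType} (a b : R * R * R) : R :=
  a.1.1 * b.1.1 + a.1.2 * b.1.2 + a.2 * b.2.

Definition sphere2 (R : realType) : set (R * R * R) := [set x | dot3 x x = 1].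

Definition neg3 {R : realType} (x : R * R * R) : R * R * R :=
  (- x.1.1, - x.1.2, - x.2).

Definition centrally_symmetric {R : realType}
  (mu : set (R * R * R) -> \bar R) : Prop :=
  forall E : set (R * R * R), measurable E -> mu (neg3 @^-1` E) = mu E.

Definition weight {R : realType} (lam : R) (n0 : R * R * R)
  (g : R * R * R -> R) (n : R * R * R) : R :=
  (if lam < dot3 n0 n then 1 else 0) + g n * (if dot3 n0 n == lam then 1 else 0).

Definition x0 {R : realType} (mu : probability (R * R * R)%type R) (lam : R)
  (n0 : R * R * R) (g : R * R * R -> R) : R :=
  Rintegral mu setT (weight lam n0 g).

Definition bvec {R : realType} (mu : probability (R * R * R)%type R) (lam : R)
  (n0 : R * R * R) (g : R * R * R -> R) : R * R * R :=
  (Rintegral mu setT (fun n => weight lam n0 g n * n.1.1),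
   Rintegral mu setT (fun n => weight lam n0 g n * n.1.2),
   Rintegral mu setT (fun n => weight lam n0 g n * n.2)).

(** The weight [weight lam n0 g] is squeezed between the indicators of the
    half-spaces [{n0.n > lam}] and [{n0.n >= lam}], hence antitone in [lam].
    By central symmetry both open half-spaces [{n0.n > 0}] and [{n0.n < 0}]
    have the same mass [a], so [a <= x0(0) <= 1 - a].  If [x0(lam) = 1/2] with
    [lam > 0] then [1/2 <= a], and with [lam < 0] then [1 - a <= 1/2]; either
    way [a = 1/2 = x0(0)].  The integrands [weight 0] and [weight lam] are
    pointwise comparable with equal integrals, so they agree almost everywhere
    and so do their first moments [bvec]. *)

From HB Require Import structures.
From mathcomp Require Import all_boot all_order all_algebra.
From mathcomp Require Import all_classical all_reals all_analysis.
From mathcomp Require Import measurable_realfun lra.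
Import Order.TTheory GRing.Theory Num.Theory.
Local Open Scope classical_set_scope.
Local Open Scope ring_scope.

Section integral_facts.
Context d (T : measurableType d) (R : realType).

Lemma Rintegral_indic (mu : {measure set T -> \bar R}) (A : set T) :
  measurable A -> \int[mu]_x \1_A x = fine (mu A).
Proof. by move=> mA; rewrite /Rintegral integral_indic// setIT. Qed.

Lemma bounded_integrable (mu : {finite_measure set T -> \bar R})
    (f : T -> R) (M : R) :
  measurable_fun setT f -> (forall x, `|f x| <= M) ->
  mu.-integrable setT (EFin \o f).
Proof.
move=> mf fM; apply: measurable_bounded_integrable => //.
  by rewrite ltey_eq fin_num_measure.
exists M; split; first exact: num_real.
by move=> K KM x _; exact: le_trans (fM x) (ltW KM).
Qed.

Lemma ae_eq_Rintegral (mu : {measure set T -> \bar R}) (f g : T -> R) :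
  measurable_fun setT f -> measurable_fun setT g -> ae_eq mu setT f g ->
  \int[mu]_x f x = \int[mu]_x g x.
Proof.
move=> mf mg fg; rewrite /Rintegral; congr fine.
by apply: ae_eq_integral => //; [exact/measurable_EFinP..|exact: ae_eq_comp].
Qed.

Lemma ae_eq_of_le_Rintegral (mu : {measure set T -> \bar R}) (f g : T -> R) :
  mu.-integrable setT (EFin \o f) -> mu.-integrable setT (EFin \o g) ->
  (forall x, g x <= f x) -> \int[mu]_x f x = \int[mu]_x g x ->
  ae_eq mu setT f g.
Proof.
move=> fi gi gf fg.
have iD : mu.-integrable setT (EFin \o (f \- g)).
  by apply: eq_integrable (integrableB measurableT fi gi).
have mD := measurable_int mu iD.
have int0 : (\int[mu]_x `|(EFin \o (f \- g)%R) x| = 0)%E.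
  rewrite (eq_integral (EFin \o (f \- g)%R)); last first.
    by move=> x _ /=; rewrite ger0_norm // subr_ge0.
  rewrite -(fineK (integrable_fin_num measurableT iD)).
  by rewrite [fine _](RintegralB measurableT fi gi) fg subrr.
have := proj1 (ae_eq_integral_abs mu measurableT mD) int0.
by apply: filterS => x fgx /fgx [] /eqP; rewrite subr_eq0 => /eqP.
Qed.

End integral_facts.

Section halfspaces.
Context {R : realType} (n0 : R * R * R).

Lemma measurable_dot3 : measurable_fun setT (dot3 n0).
Proof.
have m11 : measurable_fun setT (fun n : R * R * R => n.1.1).
  exact: measurableT_comp measurable_fst measurable_fst.
have m12 : measurable_fun setT (fun n : R * R * R => n.1.2).
  exact: measurableT_comp measurable_snd measurable_fst.
have m2 : measurable_fun setT (fun n : R * R * R => n.2) by exact: measurable_snd.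
by apply: measurable_funD; first apply: measurable_funD; exact: measurable_funM.
Qed.

Lemma measurable_dot3_itv (i : interval R) :
  measurable [set n | dot3 n0 n \in i].
Proof.
have := measurable_dot3 measurableT _ (measurable_itv i).
by rewrite setTI; congr measurable; apply/seteqP; split=> n /=; rewrite inE.
Qed.

Lemma measurable_dot3_gt (lam : R) : measurable [set n | lam < dot3 n0 n].
Proof.
have := measurable_dot3_itv `]lam, +oo[.
by congr measurable; apply/seteqP; split=> n /=; rewrite in_itv /= andbT.
Qed.

Lemma measurable_dot3_ge (lam : R) : measurable [set n | lam <= dot3 n0 n].
Proof.
have := measurable_dot3_itv `[lam, +oo[.
by congr measurable; apply/seteqP; split=> n /=; rewrite in_itv /= andbT.
Qed.

End halfspaces.

Section weight.
Context {R : realType} {n0 : R * R * R} {g : R * R * R -> R}.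
Hypothesis g01 : forall n, 0 <= g n <= 1.

Lemma indic_le_weight (lam : R) (A : set (R * R * R)) (n : R * R * R) :
  A `<=` [set m | lam < dot3 n0 m] -> \1_A n <= weight lam n0 g n.
Proof.
move=> sA; have /andP[g0 g1] := g01 n; rewrite indicE /weight.
have [/set_mem/sA/= lt_lam|_] := boolP (n \in A).
  by rewrite lt_lam (gt_eqF lt_lam) mulr0 addr0.
by case: ltrgtP => _; rewrite ?mulr0 ?mulr1 ?addr0 ?mulr0n; lra.
Qed.

Lemma weight_le_indic (lam : R) (A : set (R * R * R)) (n : R * R * R) :
  [set m | lam <= dot3 n0 m] `<=` A -> weight lam n0 g n <= \1_A n.
Proof.
move=> sA; have /andP[g0 g1] := g01 n; rewrite indicE /weight.
have [_|nA] := boolP (n \in A).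
  by case: ltrgtP => _; rewrite ?mulr0 ?mulr1 ?addr0 ?mulr1n; lra.
have lt_lam : dot3 n0 n < lam.
  by rewrite ltNge; apply: contra nA => le_lam; exact/mem_set/sA.
by rewrite (lt_gtF lt_lam) (lt_eqF lt_lam) mulr0 addr0.
Qed.

Lemma le_weight (lam lam' : R) (n : R * R * R) :
  lam <= lam' -> weight lam' n0 g n <= weight lam n0 g n.
Proof.
rewrite le_eqVlt => /predU1P[-> // | lt_lam].
apply: le_trans (weight_le_indic lam' [set m | lam' <= dot3 n0 m] n _) _ => //.
by apply: indic_le_weight => m /=; exact: lt_le_trans.
Qed.

Lemma normr_weight_le1 (lam : R) (n : R * R * R) : `|weight lam n0 g n| <= 1.
Proof.
have /andP[g0 g1] := g01 n; rewrite /weight.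
by case: ltrgtP => _; rewrite ?mulr0 ?mulr1 ?addr0 ?add0r ?normr0 ?normr1 ?ger0_norm.
Qed.

Lemma measurable_weight (lam : R) :
  measurable_fun setT g -> measurable_fun setT (weight lam n0 g).
Proof.
move=> mg; apply: measurable_funD.
  by apply: measurable_fun_ifT => //; apply: measurable_fun_ltr => //;
    exact: measurable_dot3.
apply: measurable_funM => //; apply: measurable_fun_ifT => //.
by apply: measurable_fun_eqr => //; exact: measurable_dot3.
Qed.

End weight.

Section cross_section.
Context {R : realType} {mu : probability (R * R * R)%type R}.
Context {n0 : R * R * R} {g : R * R * R -> R}.
Hypotheses (mg : measurable_fun setT g) (g01 : forall n, 0 <= g n <= 1).

Lemma integrable_weight (lam : R) : mu.-integrable setT (EFin \o weight lam n0 g).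
Proof.
apply: (@bounded_integrable _ _ _ mu _ 1); first exact: measurable_weight.
exact: normr_weight_le1.
Qed.

Lemma measure_le_x0 (lam : R) (A : set (R * R * R)) : measurable A ->
  A `<=` [set m | lam < dot3 n0 m] -> fine (mu A) <= x0 mu lam n0 g.
Proof.
move=> mA sA; rewrite -Rintegral_indic //.
apply: le_Rintegral => //; [exact: integrable_indic|exact: integrable_weight|].
by move=> n _; exact: indic_le_weight.
Qed.

Lemma x0_le_measure (lam : R) (A : set (R * R * R)) : measurable A ->
  [set m | lam <= dot3 n0 m] `<=` A -> x0 mu lam n0 g <= fine (mu A).
Proof.
move=> mA sA; rewrite -Rintegral_indic //.
apply: le_Rintegral => //; [exact: integrable_weight|exact: integrable_indic|].
by move=> n _; exact: weight_le_indic.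
Qed.

Lemma weight_ae_eq_of_x0_eq (lam lam' : R) :
  x0 mu lam n0 g = x0 mu lam' n0 g ->
  ae_eq mu setT (weight lam n0 g) (weight lam' n0 g).
Proof.
wlog le_lam : lam lam' / lam <= lam'.
  move=> wlog_le; have [le_lam|/ltW le_lam'] := leP lam lam'; first exact: wlog_le.
  by move=> x0_eq; apply: ae_eq_sym; exact: wlog_le.
move=> x0_eq; apply: ae_eq_of_le_Rintegral x0_eq; try exact: integrable_weight.
by move=> n; exact: le_weight.
Qed.

Lemma bvec_eq_of_weight_ae_eq (lam lam' : R) :
  ae_eq mu setT (weight lam n0 g) (weight lam' n0 g) ->
  bvec mu lam n0 g = bvec mu lam' n0 g.
Proof.
move=> w_ae.
have m11 : measurable_fun setT (fun n : R * R * R => n.1.1).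
  exact: measurableT_comp measurable_fst measurable_fst.
have m12 : measurable_fun setT (fun n : R * R * R => n.1.2).
  exact: measurableT_comp measurable_snd measurable_fst.
have m2 : measurable_fun setT (fun n : R * R * R => n.2) by exact: measurable_snd.
rewrite /bvec; congr (_, _, _); apply: ae_eq_Rintegral;
  by [apply: measurable_funM => //; exact: measurable_weight
     |exact: ae_eq_mul2r].
Qed.

End cross_section.

Section symmetric.
Context {R : realType} {mu : probability (R * R * R)%type R}.
Context {n0 : R * R * R} {g : R * R * R -> R}.
Hypothesis mu_sym : centrally_symmetric mu.
Hypotheses (mg : measurable_fun setT g) (g01 : forall n, 0 <= g n <= 1).

Lemma measure_dot3_lt0 :
  mu [set n | dot3 n0 n < 0] = mu [set n | 0 < dot3 n0 n].
Proof.
rewrite -(mu_sym _ (measurable_dot3_gt n0 0)); congr (mu _).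
by apply/seteqP; split=> n; rewrite /= /dot3 /neg3 /= => ?; lra.
Qed.

Lemma measure_dot3_ge0 :
  fine (mu [set n | 0 <= dot3 n0 n]) = 1 - fine (mu [set n | 0 < dot3 n0 n]).
Proof.
have -> : [set n | 0 <= dot3 n0 n] = ~` [set n | dot3 n0 n < 0].
  by apply/seteqP; split=> n; rewrite /= leNgt => /negP.
rewrite probability_setC; last exact: (measurable_dot3_itv n0 `]-oo, 0[).
by rewrite measure_dot3_lt0 -[mu _]fineK ?fin_num_measure //; exact: measurable_dot3_gt.
Qed.

Lemma x0_at0_half (lam : R) : x0 mu lam n0 g = 1 / 2 -> x0 mu 0 n0 g = 1 / 2.
Proof.
move=> x0_half; set a := fine (mu [set n | 0 < dot3 n0 n]).
have mgt := measurable_dot3_gt n0; have mge := measurable_dot3_ge n0.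
have a_le : a <= x0 mu 0 n0 g by exact: measure_le_x0 mg g01 0 _ (mgt 0) _.
have le_1a : x0 mu 0 n0 g <= 1 - a.
  by rewrite -measure_dot3_ge0; exact: x0_le_measure mg g01 0 _ (mge 0) _.
have [lam_gt0|lam_lt0|lam0] := ltrgtP 0 lam; last by rewrite lam0.
- have : x0 mu lam n0 g <= a.
    by apply: (x0_le_measure mg g01 lam _ (mgt 0)) => n /=; exact: lt_le_trans.
  lra.
- have : 1 - a <= x0 mu lam n0 g.
    rewrite -measure_dot3_ge0.
    by apply: (measure_le_x0 mg g01 lam _ (mge 0)) => n /=; exact: lt_le_trans.
  lra.
Qed.

End symmetric.

Theorem lemma3 (R : realType) (mu : probability (R * R * R)%type R)
  (Hsupp : mu (~` @sphere2 R) = 0%E)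
  (Hsym : centrally_symmetric mu)
  (n0 : R * R * R) (Hn0 : dot3 n0 n0 <= 1)
  (lam : R) (Hlam : -1 <= lam <= 1)
  (g : R * R * R -> R) (Hgm : measurable_fun setT g)
  (Hg01 : forall n, 0 <= g n <= 1) :
  x0 mu lam n0 g = 1 / 2 -> bvec mu 0 n0 g = bvec mu lam n0 g.
Proof.
move=> x0_half; apply: (bvec_eq_of_weight_ae_eq Hgm).
apply: (weight_ae_eq_of_x0_eq Hgm Hg01).
by rewrite x0_half (x0_at0_half Hsym Hgm Hg01 _ x0_half).
Qed.
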